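(* Let $X$ be a non-empty recognizable subset of $Z^*$. Then for every integer $p > 0$ there exists $\sigma \in X$ with $|\sigma| > p$.
   Context: $Z^*$ is the commutative group of finite sequences of integers whose last entry is non-zero (including the empty sequence), with pointwise addition (shorter sequence padded by zeros) and the empty sequence as unit; equivalently the free abelian group on countably many generators, isomorphic to $(\mathbb{Q}_{>0},\times,1)$ via exponents of prime factorizations. For $\sigma\in Z^*$, $|\sigma|$ is its length, i.e. the smallest $n_0$ such that $\sigma(n)=0$ for all $n>n_0$. A subset $S$ of a monoid $M$ is recognizable if there exist a finite monoid $N$, a monoid morphism $\varphi\colon M \to N$ and a subset $T \subseteq N$ with $S = \varphi^{-1}(T)$. *)

From mathcomp Require Import all_boot all_order all_algebra.
Set Implicit Arguments. Unset Strict Implicit. Unset Printing Implicit Defensive.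
Import GRing.Theory.
Local Open Scope ring_scope.

(* Z^* : finite sequences of integers whose last entry is non-zero
   (including the empty sequence), with pointwise addition (shorter sequence
   padded by zeros), then trailing zeros removed. *)

Fixpoint trim (s : seq int) : seq int :=
  match s with
  | [::] => [::]
  | x :: s' => let t := trim s' in
               if (t == [::]) && (x == 0) then [::] else x :: t
  end.

Definition canon (s : seq int) : bool := (s == [::]) || (last 0 s != 0).

Definition Zstar := {s : seq int | canon s}.

Definition zseq (x : Zstar) : seq int := sval x.

Definition zlen (x : Zstar) : nat := size (zseq x).

Lemma canon_trim s : canon (trim s).
Proof.
rewrite /canon; elim: s => [|x s IH] //=.
move: IH; case: (trim s) => [|y t] /= IH //.
by case: (boolP (x == 0)) => //= ->.
Qed.

Definition zmk (s : seq int) : Zstar := exist _ (trim s) (canon_trim s).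

Definition zzero : Zstar := exist _ [::] (erefl true).

Definition zadd (x y : Zstar) : Zstar :=
  zmk (mkseq (fun i => nth 0 (zseq x) i + nth 0 (zseq y) i)
             (maxn (size (zseq x)) (size (zseq y)))).

Definition recognizable (S : Zstar -> Prop) : Prop :=
  exists (N : finType) (op : N -> N -> N) (e : N),
    (forall a b c, op a (op b c) = op (op a b) c) /\
    (forall a, op e a = a) /\ (forall a, op a e = a) /\
    exists (phi : Zstar -> N),
      phi zzero = e /\
      (forall x y, phi (zadd x y) = op (phi x) (phi y)) /\
      exists (T : pred N), forall x, S x <-> T (phi x).

From mathcomp Require Import all_boot all_order all_algebra.
Set Implicit Arguments. Unset Strict Implicit. Unset Printing Implicit Defensive.
Import GRing.Theory.
Local Open Scope ring_scope.

(* Let phi : Z^* -> N recognize X and let x be in X.  For k >= |x|, the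
   multiples of the unit vector e_k form a group, so their images form a finite
   group in N and some m e_k with m > 0 is sent to the unit of N.  Then
   phi (x + m e_k) = phi x, so x + m e_k is in X, and its length exceeds k. *)

Lemma nth_trim s i : nth 0 (trim s) i = nth 0 s i.
Proof.
elim: s i => [|x s IH] i //=.
case: ifP => [/andP[/eqP s0 /eqP ->]|_]; case: i => [|i] //=.
by rewrite -IH s0 nth_nil.
Qed.

Lemma trim_eq_nil s : (forall i, nth 0 s i = 0) -> trim s = [::].
Proof.
elim: s => [|x s IH] //= s0.
have /= -> := s0 0%N.
by rewrite IH // => i; apply: (s0 i.+1).
Qed.

Lemma eq_trim s t : (forall i, nth 0 s i = nth 0 t i) -> trim s = trim t.
Proof.
elim: s t => [|x s IH] [|y t] st //.
- by rewrite [RHS]trim_eq_nil // => i; rewrite -st nth_nil.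
- by rewrite [LHS]trim_eq_nil // => i; rewrite st nth_nil.
have /= -> := st 0%N.
by rewrite /= (IH t) // => i; apply: (st i.+1).
Qed.

Lemma trim_id s : canon s -> trim s = s.
Proof.
elim: s => [|x s IH] //=.
case: s IH => [|y s] IH; first by rewrite /canon /= => /negbTE ->.
by move=> /IH ->.
Qed.

Lemma Zstar_nth_inj (x y : Zstar) :
  (forall i, nth 0 (zseq x) i = nth 0 (zseq y) i) -> x = y.
Proof.
case: x y => [s cs] [t ct] /= st.
by apply: val_inj; rewrite /= -(trim_id cs) -(trim_id ct); apply: eq_trim.
Qed.

Lemma nth_zadd x y i :
  nth 0 (zseq (zadd x y)) i = nth 0 (zseq x) i + nth 0 (zseq y) i.
Proof.
rewrite /zseq /= nth_trim.
have [i_lt|i_ge] := ltnP i (maxn (size (zseq x)) (size (zseq y))).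
  by rewrite nth_mkseq.
rewrite geq_max in i_ge; case/andP: i_ge => ix iy.
by rewrite nth_default ?size_mkseq ?geq_max ?ix ?iy // !nth_default ?addr0.
Qed.

Lemma zlen_gt x i : nth 0 (zseq x) i != 0 -> (i < zlen x)%N.
Proof. by rewrite ltnNge; apply: contra => /(nth_default 0) ->. Qed.

Section UnitVector.

Variable k : nat.

Definition zunit (c : int) : Zstar := zmk (rcons (nseq k 0) c).

Lemma nth_zunit c i : nth 0 (zseq (zunit c)) i = if i == k then c else 0.
Proof.
rewrite /zseq /= nth_trim nth_rcons size_nseq nth_nseq.
by case: ltngtP; rewrite ?if_same.
Qed.

Lemma zadd_zunit a b : zadd (zunit a) (zunit b) = zunit (a + b).
Proof. by apply: Zstar_nth_inj => i; rewrite nth_zadd !nth_zunit; case: eqP; rewrite ?addr0. Qed.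

Lemma zunit0 : zunit 0 = zzero.
Proof. by apply: Zstar_nth_inj => i; rewrite nth_zunit nth_nil if_same. Qed.

End UnitVector.

Lemma finType_nat_collision (N : finType) (f : nat -> N) :
  exists i j, (i < j)%N /\ f i = f j.
Proof.
pose g (i : 'I_#|N|.+1) := f i.
have /injectivePn [i [j ij gij]] : ~~ injectiveb g.
  by apply/injectiveP => /leq_card; rewrite card_ord ltnn.
have [lt_ij|lt_ji|eq_ij] := ltngtP i j.
- by exists i, j.
- by exists j, i.
- by case/eqP: ij; apply: ord_inj.
Qed.

Section FiniteMonoid.

Variables (N : finType) (op : N -> N -> N) (e : N).
Hypotheses (opA : associative op) (op1 : left_id e op).

Lemma finite_monoid_hom_nat_periodic (f : nat -> N) :
  {morph f : m n / (m + n)%N >-> op m n} ->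
  (forall n, exists b, op b (f n) = e) ->
  exists2 m, (0 < m)%N & f m = e.
Proof.
move=> fD finv; have [i [j [lt_ij fij]]] := finType_nat_collision f.
have [b bfi] := finv i.
exists (j - i)%N; first by rewrite subn_gt0.
by have := bfi; rewrite fij -{1}(subnKC (ltnW lt_ij)) fD opA bfi op1.
Qed.

End FiniteMonoid.

Theorem proposition7 (X : Zstar -> Prop) :
  recognizable X -> (exists x, X x) ->
  forall p : nat, (0 < p)%N -> exists sigma, X sigma /\ (p < zlen sigma)%N.
Proof.
move=> [N [op [e [opA [op1 [opr [phi [phi0 [phiD [T XT]]]]]]]]]] [x Xx] p _.
set k := maxn p (zlen x).
have [m m_gt0 phim] : exists2 m, (0 < m)%N & phi (zunit k m%:Z) = e.
  apply: (finite_monoid_hom_nat_periodic opA op1).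
    by move=> a b; rewrite -phiD zadd_zunit PoszD.
  move=> n; exists (phi (zunit k (- n%:Z))).
  by rewrite -phiD zadd_zunit addNr zunit0 phi0.
exists (zadd x (zunit k m)); split.
  by apply/XT; rewrite phiD phim opr; apply/XT.
apply: (@leq_trans k.+1); first by rewrite ltnS leq_maxl.
apply: zlen_gt; rewrite nth_zadd nth_zunit eqxx nth_default ?leq_maxr // add0r.
by rewrite eqz_nat -lt0n.
Qed.
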